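(* Assume $L/F$ is ramified. If $\Phi\in\pi_{\tau,\chi}^{K_n}$ with $n\ge1$, then $\operatorname{supp}(\Phi)\subset\mathfrak p_L^{c-n}$ and $\Phi$ is constant on cosets of $\mathfrak p_L^{c+n-1}$.
   Context: $F$ is a $p$-adic field with $p\ne2$, ring of integers $\mathcal O$ with maximal ideal $\mathfrak p$, residue field of order $q$. $L/F$ is a quadratic extension with ring of integers $\mathcal O_L$, maximal ideal $\mathfrak p_L$, conjugation $x\mapsto\overline x$, norm $N:L\to F$, $L^1=\ker N$; $\omega$ is the nontrivial character of $F^\times/N(L^\times)$. $\chi$ is a character of $L^\times$ not factoring through $N$. $\tau$ is a nontrivial additive character of $F$ with conductor $\mathfrak p^c$, i.e. $\tau$ is trivial on $\mathfrak p^m$ iff $m\ge c$. Put $\langle x,y\rangle=\tau(\operatorname{tr}_{L/F}(xy))$ and $\widehat\Phi(x)=\int_L\Phi(y)\langle x,y\rangle\,dy$ for Schwartz functions $\Phi$ on $L$, with Haar measure normalized so that $\widehat{\widehat\Phi}(x)=\Phi(-x)$. $\mathcal S(L)_\chi$ is the space of Schwartz functions with $\Phi(xy)=\chi(y)^{-1}\Phi(x)$ for $y\in L^1$. $G_+=\{g\in GL_2(F):\det g\in N(L^\times)\}$, and $\pi_{\tau,\chi}$ is the irreducible representation of $G_+$ on $\mathcal S(L)_\chi$ satisfying $\pi_{\tau,\chi}\begin{pmatrix}1&u\\0&1\end{pmatrix}\Phi(x)=\tau(uN(x))\Phi(x)$, $\pi_{\tau,\chi}\begin{pmatrix}a&0\\0&a^{-1}\end{pmatrix}\Phi(x)=\omega(a)|a|_L^{1/2}\Phi(ax)$,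 $\pi_{\tau,\chi}\begin{pmatrix}0&1\\-1&0\end{pmatrix}\Phi(x)=\gamma\widehat\Phi(\overline x)$ for some complex $\gamma$ with $|\gamma|=1$. $K_n$ is the principal congruence subgroup of $GL_2(F)$ of level $n$ (contained in $G_+$ for $n\ge1$). *)

From HB Require Import structures.
From mathcomp Require Import all_boot all_order all_algebra complex.
From mathcomp Require Import reals.
Set Implicit Arguments. Unset Strict Implicit. Unset Printing Implicit Defensive.
Import Order.TTheory GRing.Theory Num.Theory.
Local Open Scope ring_scope.

(* Discrete valuations.  [v : K -> int] is only meaningful on nonzero   *)
(* elements; the value [v 0] is irrelevant.                             *)

Definition in_ideal (K : fieldType) (v : K -> int) (m : int) (x : K) : Prop :=
  x = 0 \/ (m <= v x)%R.

Definition is_normalized_dval (K : fieldType) (v : K -> int) : Prop :=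
  [/\ forall x y : K, x != 0 -> y != 0 -> v (x * y) = v x + v y,
      forall x y : K, x != 0 -> y != 0 -> x + y != 0 ->
                      Num.min (v x) (v y) <= v (x + y)
    & exists pi : K, pi != 0 /\ v pi = 1].

(* F, with its normalized valuation v, is a p-adic field (a finite extension
   of Q_p, i.e. a complete discretely valued field of characteristic 0 with
   finite residue field) whose residue field has exactly q elements and has
   characteristic different from 2. *)
Definition is_padic_field (F : fieldType) (v : F -> int) (q : nat) : Prop :=
  [/\ is_normalized_dval v,
      [pchar F] =i pred0,
      (* residue field O/p has exactly q elements *)
      (exists r : seq F,
         [/\ size r = q, uniq r,
             forall x, x \in r -> in_ideal v 0 x,
             forall x y, x \in r -> y \in r -> x != y -> ~ in_ideal v 1 (x - y)
           & forall x, in_ideal v 0 x -> exists2 y, y \in r & in_ideal v 1 (x - y)]),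
      (forall u : nat -> F,
         (forall k : int, exists N, forall m n, (N <= m)%N -> (N <= n)%N ->
                                   in_ideal v k (u m - u n)) ->
         exists l : F, forall k : int, exists N, forall n, (N <= n)%N ->
                                   in_ideal v k (u n - l))
    & (* residue characteristic p <> 2, i.e. 2 is a unit of O *)
      v 2%:R = 0].

(* L is a quadratic extension of F via the embedding iota, with nontrivial
   Galois conjugation sigma (an involutive field automorphism of L, different
   from the identity, whose fixed field is exactly iota(F)); trF and nrmF are
   the trace and norm L -> F. *)
Definition is_quadratic_ext (F L : fieldType) (iota : {rmorphism F -> L})
  (sigma : {rmorphism L -> L}) (trF nrmF : L -> F) : Prop :=
  [/\ forall x, sigma (sigma x) = x,
      exists x, sigma x != x,
      forall x, sigma x = x <-> exists a, x = iota a,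
      forall x, iota (trF x) = x + sigma x
    & forall x, iota (nrmF x) = x * sigma x].

(* vL is the normalized valuation of L extending (a multiple of) vF, and L/F
   is ramified: vL (iota a) = 2 * vF a (ramification index 2). *)
Definition ramified_ext_valuation (F L : fieldType) (iota : {rmorphism F -> L})
  (vF : F -> int) (vL : L -> int) : Prop :=
  is_normalized_dval vL /\ forall a, a != 0 -> vL (iota a) = 2%:Z * vF a.

Section Weil.
Variables (R : realType) (F L : fieldType).
Local Notation C := (R[i]).

(* Schwartz (locally constant, compactly supported) functions on L. *)
Definition schwartz (vL : L -> int) (Phi : L -> C) : Prop :=
  exists m : int,
    (forall x, Phi x != 0 -> in_ideal vL (- m) x) /\
    (forall x y, in_ideal vL m y -> Phi (x + y) = Phi x).

Definition schwartz_chi (vL : L -> int) (nrmF : L -> F) (chi : L -> C)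
  (Phi : L -> C) : Prop :=
  schwartz vL Phi /\
  forall x y, nrmF y = 1 -> Phi (x * y) = (chi y)^-1 * Phi x.

Definition haar_integral (vL : L -> int) (I : (L -> C) -> C) : Prop :=
  [/\ forall Phi Psi, schwartz vL Phi -> schwartz vL Psi ->
        I (fun x => Phi x + Psi x) = I Phi + I Psi,
      forall (k : C) Phi, schwartz vL Phi -> I (fun x => k * Phi x) = k * I Phi,
      forall Phi a, schwartz vL Phi -> I (fun x => Phi (x + a)) = I Phi
    & forall Phi, schwartz vL Phi -> (forall x, 0 <= Phi x) -> 0 <= I Phi].

Definition fourier (I : (L -> C) -> C) (tau : F -> C) (trF : L -> F)
  (Phi : L -> C) : L -> C :=
  fun x => I (fun y => Phi y * tau (trF (x * y))).

Definition additive_char_conductor (vF : F -> int) (tau : F -> C) (c : int) : Prop :=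
  [/\ forall a b, tau (a + b) = tau a * tau b,
      forall a, `|tau a| = 1
    & forall m : int, (forall a, in_ideal vF m a -> tau a = 1) <-> c <= m].

Definition char_not_via_norm (vL : L -> int) (nrmF : L -> F) (chi : L -> C) : Prop :=
  [/\ forall x y, x != 0 -> y != 0 -> chi (x * y) = chi x * chi y,
      forall x, x != 0 -> chi x != 0,
      (exists m : int, (0 < m)%R /\ forall x, in_ideal vL m (x - 1) -> chi x = 1)
    & ~ exists eta : F -> C, forall x, x != 0 -> chi x = eta (nrmF x)].

Definition norm_residue_char (nrmF : L -> F) (omega : F -> C) : Prop :=
  forall a : F, a != 0 ->
    ((exists y, y != 0 /\ nrmF y = a) -> omega a = 1) /\
    (~ (exists y, y != 0 /\ nrmF y = a) -> omega a = -1).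

End Weil.

Definition mx22 (K : ringType) (a b c d : K) : 'M[K]_2 :=
  \matrix_(i < 2, j < 2)
    if (i == 0 :> nat) then (if (j == 0 :> nat) then a else b)
    else (if (j == 0 :> nat) then c else d).

Definition in_Gplus (F L : fieldType) (nrmF : L -> F) (g : 'M[F]_2) : Prop :=
  exists y : L, y != 0 /\ nrmF y = \det g.

Definition in_Kn (F : fieldType) (vF : F -> int) (n : int) (g : 'M[F]_2) : Prop :=
  forall i j : 'I_2, in_ideal vF n (g i j - (i == j)%:R).

Section Rep.
Variables (R : realType) (F L : fieldType).
Local Notation C := (R[i]).

Definition is_irrep_Gplus (vL : L -> int) (nrmF : L -> F) (chi : L -> C)
  (pi : 'M[F]_2 -> (L -> C) -> (L -> C)) : Prop :=
  let S := schwartz_chi vL nrmF chi in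
  [/\ forall g Phi, in_Gplus nrmF g -> S Phi -> S (pi g Phi),
      forall g Phi Psi (k : C), in_Gplus nrmF g -> S Phi -> S Psi ->
        pi g (fun x => k * Phi x + Psi x) = (fun x => k * pi g Phi x + pi g Psi x),
      forall Phi, S Phi -> pi 1%:M Phi = Phi,
      forall g h Phi, in_Gplus nrmF g -> in_Gplus nrmF h -> S Phi ->
        pi (g *m h) Phi = pi g (pi h Phi)
    &
      (exists Phi, S Phi /\ Phi <> (fun _ => 0)) /\
      forall W : (L -> C) -> Prop,
        (forall Phi, W Phi -> S Phi) ->
        W (fun _ => 0) ->
        (forall Phi Psi (k : C), W Phi -> W Psi -> W (fun x => k * Phi x + Psi x)) ->
        (forall g Phi, in_Gplus nrmF g -> W Phi -> W (pi g Phi)) ->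
        (forall Phi, W Phi -> Phi = (fun _ => 0)) \/ (forall Phi, S Phi -> W Phi)].

End Rep.

From HB Require Import structures.
From mathcomp Require Import all_boot all_order all_algebra complex.
From mathcomp Require Import reals.
From mathcomp Require Import zify ring.
From Stdlib Require Import FunctionalExtensionality.

(* Invariance under the unipotents [n(u)], [u] in [p^n], gives [tau (u N(x)) = 1]
   wherever [Phi x <> 0]; by the conductor of [tau], [vF (N x) = vL x >= c - n].
   As [n(u) w = w n^-(-u)] with [n^-(-u)] in [K_n], the vector
   [w Phi = gamma * hat Phi o sigma] is [n(u)]-invariant as well, so [hat Phi] is
   supported in [p_L^(c-n)].  Fourier inversion writes [Phi] as an integral of
   [hat Phi] against [y |-> tau (tr (x y))], and translating [x] by
   [h] in [p_L^(c+n-1)] multiplies the integrand by [tau (tr (h y)) = 1]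
   because, L/F being ramified, [tr (p_L^(2c-1))] lies in [p^c]. *)
Set Implicit Arguments. Unset Strict Implicit. Unset Printing Implicit Defensive.
Import Order.TTheory GRing.Theory Num.Theory.
Local Open Scope ring_scope.

Lemma in_ideal_dval {K : fieldType} {v : K -> int} {m x} :
  x != 0 -> in_ideal v m x <-> m <= v x.
Proof. by move=> x0; split=> [[x_0|//]|]; [rewrite x_0 eqxx in x0|right]. Qed.

Section DiscreteValuation.
Variables (K : fieldType) (v : K -> int).
Hypothesis hv : is_normalized_dval v.

Lemma dvalM {x y} : x != 0 -> y != 0 -> v (x * y) = v x + v y.
Proof. by case: hv => vM _ _; apply: vM. Qed.

Lemma dvalD_ge_min {x y} : x != 0 -> y != 0 -> x + y != 0 ->
  Num.min (v x) (v y) <= v (x + y).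
Proof. by case: hv => _ vD _; apply: vD. Qed.

Lemma dval1 : v 1 = 0.
Proof. by have := @dvalM 1 1 (oner_neq0 _) (oner_neq0 _); rewrite mulr1; lia. Qed.

Lemma dvalN x : x != 0 -> v (- x) = v x.
Proof.
move=> x0; have N10 : (-1 : K) != 0 by rewrite oppr_eq0 oner_neq0.
have := dvalM N10 N10; rewrite mulrNN mulr1 dval1 => vN1.
by rewrite -mulN1r dvalM //; lia.
Qed.

Lemma dvalV x : x != 0 -> v x^-1 = - v x.
Proof. by move=> x0; have := dvalM x0 (invr_neq0 x0); rewrite mulfV // dval1; lia. Qed.

Lemma dvalD_eq_min {x y} : x != 0 -> y != 0 -> v x != v y ->
  x + y != 0 /\ v (x + y) = Num.min (v x) (v y).
Proof.
move=> x0 y0 vxy.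
have xy0 : x + y != 0.
  by apply: contra vxy; rewrite addr_eq0 => /eqP ->; rewrite dvalN.
have Nx0 : - x != 0 by rewrite oppr_eq0.
have Ny0 : - y != 0 by rewrite oppr_eq0.
split=> //; have := dvalD_ge_min x0 y0 xy0.
have := dvalD_ge_min xy0 Ny0; rewrite addrK dvalN // => /(_ x0).
have := dvalD_ge_min xy0 Nx0; rewrite addrC addKr dvalN // => /(_ y0).
lia.
Qed.

Lemma in_idealN m x : in_ideal v m x -> in_ideal v m (- x).
Proof.
case: (eqVneq x 0) => [-> _|x0]; first by rewrite oppr0; left.
by rewrite !in_ideal_dval ?oppr_eq0 // dvalN.
Qed.

Lemma in_idealD m x y : in_ideal v m x -> in_ideal v m y -> in_ideal v m (x + y).
Proof.
case: (eqVneq x 0) => [-> _|x0]; first by rewrite add0r.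
case: (eqVneq y 0) => [-> //|y0]; first by rewrite addr0.
case: (eqVneq (x + y) 0) => [-> _ _|xy0]; first by left.
rewrite !in_ideal_dval // => hx hy.
by apply: le_trans (dvalD_ge_min x0 y0 xy0); rewrite le_min hx hy.
Qed.

Lemma in_idealM m k x y : in_ideal v m x -> in_ideal v k y -> in_ideal v (m + k) (x * y).
Proof.
case: (eqVneq x 0) => [-> _ _|x0]; first by rewrite mul0r; left.
case: (eqVneq y 0) => [-> _ _|y0]; first by rewrite mulr0; left.
by rewrite !in_ideal_dval ?mulf_neq0 // dvalM //; lia.
Qed.

End DiscreteValuation.

Section RamifiedQuadraticExtension.
Variables (F L : fieldType) (iota : {rmorphism F -> L}) (sigma : {rmorphism L -> L})
  (trF nrmF : L -> F) (vF : F -> int) (vL : L -> int).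
Hypothesis hL : is_quadratic_ext iota sigma trF nrmF.
Hypothesis hram : ramified_ext_valuation iota vF vL.

Let hvL : is_normalized_dval vL. Proof. by case: hram. Qed.

Lemma sigmaK x : sigma (sigma x) = x. Proof. by case: hL. Qed.
Lemma iota_trF x : iota (trF x) = x + sigma x. Proof. by case: hL. Qed.
Lemma iota_nrmF x : iota (nrmF x) = x * sigma x. Proof. by case: hL. Qed.

Lemma sigma_iota a : sigma (iota a) = iota a.
Proof. by case: hL => _ _ fixP _ _; apply/fixP; exists a. Qed.

Lemma vL_iota a : a != 0 -> vL (iota a) = 2%:Z * vF a.
Proof. by case: hram => _; apply. Qed.

Lemma nrmF1 : nrmF 1 = 1.
Proof. by apply: (fmorph_inj iota); rewrite iota_nrmF !rmorph1 mulr1. Qed.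

Lemma trFD x y : trF (x + y) = trF x + trF y.
Proof. by apply: (fmorph_inj iota); rewrite rmorphD !iota_trF rmorphD; ring. Qed.

Lemma in_Gplus_det1 g : \det g = 1 -> in_Gplus nrmF g.
Proof. by move=> dg; exists 1; rewrite oner_neq0 nrmF1 dg. Qed.

Lemma nrmF_neq0 x : x != 0 -> nrmF x != 0.
Proof.
by move=> x0; rewrite -(fmorph_eq0 iota) iota_nrmF mulf_neq0 ?fmorph_eq0.
Qed.

Lemma iota_basis p : sigma p != p -> forall x, exists a b, x = iota a + iota b * p.
Proof.
case: hL => _ _ fixP _ _ sp x.
have d0 : p - sigma p != 0 by rewrite subr_eq0 eq_sym.
pose w := (x - sigma x) / (p - sigma p).
have [b wb] : exists b, w = iota b.
  by apply/fixP; rewrite /w fmorph_div !rmorphB !sigmaK -mulrNN -invrN !opprB.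
have [a xa] : exists a, x - w * p = iota a.
  apply/fixP; apply/eqP; rewrite rmorphB rmorphM -subr_eq0.
  have -> : sigma x - sigma w * sigma p - (x - w * p) =
            w * (p - sigma p) - (x - sigma x) by rewrite wb sigma_iota -wb; ring.
  by rewrite divfK // subrr.
by exists a, b; rewrite -xa -wb; ring.
Qed.

(* [p + sigma p = iota (trF p)] has even valuation, while
   [vL (sigma p) = 2 vF (nrmF p) - 1] is odd like [vL p]. *)
Lemma vL_sigma_uniformizer p : p != 0 -> vL p = 1 -> vL (sigma p) = 1.
Proof.
move=> p0 vp; have sp0 : sigma p != 0 by rewrite fmorph_eq0.
have vN := vL_iota (nrmF_neq0 p0); rewrite iota_nrmF (dvalM hvL) // vp in vN.
apply/eqP; apply: contraT => vsp.
have vpsp : vL p != vL (sigma p) by rewrite vp eq_sym.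
have [tr0 vtr] := dvalD_eq_min hvL p0 sp0 vpsp.
rewrite -iota_trF fmorph_eq0 in tr0.
by move: vtr; rewrite -iota_trF vL_iota // vp; lia.
Qed.

Lemma sigma_uniformizer_neq p : p != 0 -> vL p = 1 -> sigma p != p.
Proof.
case: hL => _ _ fixP _ _ p0 vp; apply/eqP => /fixP [a pa].
have a0 : a != 0 by apply: contra p0; rewrite pa => /eqP ->; rewrite rmorph0.
by move: vp; rewrite pa vL_iota //; lia.
Qed.

(* In [x = iota a + iota b * p] the summands have valuations of different
   parity, so [vL x = min (2 vF a) (2 vF b + 1)], which [sigma] preserves. *)
Lemma vL_sigma x : x != 0 -> vL (sigma x) = vL x.
Proof.
move=> x0; case: hvL => _ _ [p [p0 vp]].
have sp0 : sigma p != 0 by rewrite fmorph_eq0.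
have vsp := vL_sigma_uniformizer p0 vp.
have [a [b ->]] : exists a b, x = iota a + iota b * p.
  by apply: iota_basis; apply: sigma_uniformizer_neq.
rewrite rmorphD rmorphM !sigma_iota.
case: (eqVneq b 0) => [->|b0]; first by rewrite rmorph0 !mul0r.
have vb q : q != 0 -> vL q = 1 -> vL (iota b * q) = 2%:Z * vF b + 1.
  by move=> q0 vq; rewrite (dvalM hvL) ?fmorph_eq0 // vL_iota // vq.
have bq0 q : q != 0 -> iota b * q != 0 by move=> q0; rewrite mulf_neq0 ?fmorph_eq0.
case: (eqVneq a 0) => [->|a0]; first by rewrite rmorph0 !add0r vb // vb.
have va := vL_iota a0; have a0' : iota a != 0 by rewrite fmorph_eq0.
have parity q : q != 0 -> vL q = 1 -> vL (iota a) != vL (iota b * q).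
  by move=> q0 vq; rewrite va vb //; apply/eqP; lia.
have [_ ->] := dvalD_eq_min hvL a0' (bq0 _ sp0) (parity _ sp0 vsp).
have [_ ->] := dvalD_eq_min hvL a0' (bq0 _ p0) (parity _ p0 vp).
by rewrite !vb.
Qed.

Lemma vF_nrmF x : x != 0 -> vF (nrmF x) = vL x.
Proof.
move=> x0; have := vL_iota (nrmF_neq0 x0).
by rewrite iota_nrmF (dvalM hvL) ?fmorph_eq0 // vL_sigma //; lia.
Qed.

Lemma in_ideal_sigma m x : in_ideal vL m x -> in_ideal vL m (sigma x).
Proof.
case: (eqVneq x 0) => [-> _|x0]; first by rewrite rmorph0; left.
by rewrite !in_ideal_dval ?fmorph_eq0 // vL_sigma.
Qed.

(* [vL (iota (trF x)) = vL (x + sigma x)] is even and at least [2m - 1]. *)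
Lemma in_ideal_trF m x : in_ideal vL (2%:Z * m - 1) x -> in_ideal vF m (trF x).
Proof.
move=> hx; case: (eqVneq (trF x) 0) => [->|tr0]; first by left.
have := in_idealD hvL hx (in_ideal_sigma hx).
rewrite -iota_trF in_ideal_dval ?fmorph_eq0 // vL_iota // => ?.
by right; lia.
Qed.

End RamifiedQuadraticExtension.

Section SL2.
Variable K : fieldType.

Lemma det_mx22 (a b c d : K) : \det (mx22 a b c d) = a * d - b * c.
Proof.
rewrite (expand_det_row _ 0) !big_ord_recl big_ord0 /cofactor !det_mx11 !mxE /=.
by rewrite /bump /= expr0 expr1 addr0 mul1r mulN1r mulrN.
Qed.

Lemma mul_upper_weyl (u : K) :
  mx22 1 u 0 1 *m mx22 0 1 (-1) 0 = mx22 0 1 (-1) 0 *m mx22 1 0 (- u) 1.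
Proof.
apply/matrixP => i j; rewrite !mxE !big_ord_recl !big_ord0 !mxE /=.
by case: i => [[|[|i]] hi] //; case: j => [[|[|j]] hj] //=; rewrite ?mxE /=; ring.
Qed.

Lemma in_Kn_upper (v : K -> int) n u : in_ideal v n u -> in_Kn v n (mx22 1 u 0 1).
Proof.
move=> hu i j; rewrite mxE.
by case: i => [[|[|i]] hi] //; case: j => [[|[|j]] hj] //=; rewrite ?subrr ?subr0 //; left.
Qed.

Lemma in_Kn_lower (v : K -> int) n u : in_ideal v n u -> in_Kn v n (mx22 1 0 u 1).
Proof.
move=> hu i j; rewrite mxE.
by case: i => [[|[|i]] hi] //; case: j => [[|[|j]] hj] //=; rewrite ?subrr ?subr0 //; left.
Qed.

End SL2.

Lemma conductor_le (R : realType) (F : fieldType) (v : F -> int) (tau : F -> R[i]) c n t :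
  is_normalized_dval v -> additive_char_conductor v tau c -> t != 0 ->
  (forall u, in_ideal v n u -> tau (u * t) = 1) -> c <= n + v t.
Proof.
move=> hv [_ _ tauc] t0 htu; apply/(tauc _).1 => a ha.
case: (eqVneq a 0) => [->|a0]; first by rewrite -(mul0r t) htu //; left.
rewrite -(divfK t0 a) htu //; right.
by rewrite (dvalM hv) ?invr_neq0 // (dvalV hv) //; move/in_ideal_dval: ha => /(_ a0); lia.
Qed.

Section FixedVectors.
Variables (R : realType) (F L : fieldType).
Variables (iota : {rmorphism F -> L}) (sigma : {rmorphism L -> L}) (trF nrmF : L -> F).
Variables (vF : F -> int) (vL : L -> int) (tau : F -> R[i]) (c : int).
Hypothesis hL : is_quadratic_ext iota sigma trF nrmF.
Hypothesis hvF : is_normalized_dval vF.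
Hypothesis hram : ramified_ext_valuation iota vF vL.
Hypothesis htau : additive_char_conductor vF tau c.

Let hvL : is_normalized_dval vL. Proof. by case: hram. Qed.

Lemma fourier_periodic (I : (L -> R[i]) -> R[i]) (Psi : L -> R[i]) k h z :
  (forall y, Psi y != 0 -> in_ideal vL k y) -> in_ideal vL (2%:Z * c - 1 - k) h ->
  fourier I tau trF Psi (z + h) = fourier I tau trF Psi z.
Proof.
case: htau => tauD _ tauc supp hh; congr (I _); apply: functional_extensionality => y.
case: (eqVneq (Psi y) 0) => [->|Psi_y]; first by rewrite !mul0r.
rewrite mulrDl (trFD hL) tauD [tau (trF (h * y))](tauc c).2 ?mulr1 //.
apply: (in_ideal_trF hL hram).
by have := in_idealM hvL hh (supp y Psi_y); rewrite addrNK.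
Qed.

Variables (chi : L -> R[i]) (pi : 'M[F]_2 -> (L -> R[i]) -> L -> R[i]).
Hypothesis hpi : is_irrep_Gplus vL nrmF chi pi.
Hypothesis hpi_n : forall u Phi, schwartz_chi vL nrmF chi Phi ->
  pi (mx22 1 u 0 1) Phi = (fun x => tau (u * nrmF x) * Phi x).

Lemma support_upper_invariant n Psi : schwartz_chi vL nrmF chi Psi ->
  (forall u, in_ideal vF n u -> pi (mx22 1 u 0 1) Psi = Psi) ->
  forall x, Psi x != 0 -> in_ideal vL (c - n) x.
Proof.
move=> hPsi hfix x Psi_x; case: (eqVneq x 0) => [->|x0]; first by left.
rewrite in_ideal_dval // -(vF_nrmF hL hram x0).
suff : c <= n + vF (nrmF x) by lia.
apply: (conductor_le hvF htau (nrmF_neq0 hL x0)) => u hu.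
apply: (mulIf Psi_x); rewrite mul1r.
by have := congr1 (fun f => f x) (hpi_n u hPsi); rewrite hfix.
Qed.

Lemma weyl_upper_invariant n Phi : schwartz_chi vL nrmF chi Phi ->
  (forall k, in_Kn vF n k -> pi k Phi = Phi) ->
  forall u, in_ideal vF n u ->
  pi (mx22 1 u 0 1) (pi (mx22 0 1 (-1) 0) Phi) = pi (mx22 0 1 (-1) 0) Phi.
Proof.
case: hpi => _ _ _ hcomp _ hPhi hfix u hu.
have SL2 := in_Gplus_det1 hL.
have Gw : in_Gplus nrmF (mx22 0 1 (-1) 0) by apply: SL2; rewrite det_mx22; ring.
rewrite -hcomp //; last by apply: SL2; rewrite det_mx22; ring.
rewrite mul_upper_weyl hcomp //; last by apply: SL2; rewrite det_mx22; ring.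
by rewrite hfix //; apply/in_Kn_lower/(in_idealN hvF).
Qed.

End FixedVectors.

Theorem lemma8p4
  (R : realType) (F L : fieldType)
  (vF : F -> int) (q : nat) (hF : is_padic_field vF q)
  (iota : {rmorphism F -> L}) (sigma : {rmorphism L -> L}) (trF nrmF : L -> F)
  (hL : is_quadratic_ext iota sigma trF nrmF)
  (vL : L -> int) (hram : ramified_ext_valuation iota vF vL)
  (omega : F -> R[i]) (homega : norm_residue_char nrmF omega)
  (chi : L -> R[i]) (hchi : char_not_via_norm vL nrmF chi)
  (tau : F -> R[i]) (c : int) (htau : additive_char_conductor vF tau c)
  (I : (L -> R[i]) -> R[i]) (hI : haar_integral vL I)
  (hselfdual : forall Phi, schwartz vL Phi -> forall x,
      fourier I tau trF (fourier I tau trF Phi) x = Phi (- x))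
  (gamma : R[i]) (hgamma : `|gamma| = 1)
  (pi : 'M[F]_2 -> (L -> R[i]) -> (L -> R[i]))
  (hpi : is_irrep_Gplus vL nrmF chi pi)
  (hpi_n : forall u Phi, schwartz_chi vL nrmF chi Phi ->
      pi (mx22 1 u 0 1) Phi = (fun x => tau (u * nrmF x) * Phi x))
  (hpi_a : forall a Phi, a != 0 -> schwartz_chi vL nrmF chi Phi ->
      pi (mx22 a 0 0 a^-1) Phi =
      (fun x => omega a * (q%:R : R[i]) ^ (- vF a) * Phi (iota a * x)))
  (hpi_w : forall Phi, schwartz_chi vL nrmF chi Phi ->
      pi (mx22 0 1 (-1) 0) Phi = (fun x => gamma * fourier I tau trF Phi (sigma x)))
  (n : int) (hn : 1 <= n)
  (Phi : L -> R[i]) (hPhi : schwartz_chi vL nrmF chi Phi)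
  (hfix : forall k, in_Kn vF n k -> pi k Phi = Phi) :
  (forall x, Phi x != 0 -> in_ideal vL (c - n) x) /\
  (forall x y, in_ideal vL (c + n - 1) y -> Phi (x + y) = Phi x).
Proof.
have hvF : is_normalized_dval vF by case: hF.
have [hS _ _ _ _] := hpi.
have Sw : schwartz_chi vL nrmF chi (pi (mx22 0 1 (-1) 0) Phi).
  by apply: hS => //; apply: (in_Gplus_det1 hL); rewrite det_mx22; ring.
have gamma0 : gamma != 0 by rewrite -normr_eq0 hgamma oner_neq0.
split.
  apply: (support_upper_invariant hL hvF hram htau hpi_n hPhi) => u hu.
  exact/hfix/in_Kn_upper.
have supp_hat y : fourier I tau trF Phi y != 0 -> in_ideal vL (c - n) y.
  move=> hy; rewrite -[y](sigmaK hL); apply: (in_ideal_sigma hL hram).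
  apply: (support_upper_invariant hL hvF hram htau hpi_n Sw).
    exact: (weyl_upper_invariant hL hvF hpi).
  by rewrite hpi_w // (sigmaK hL) mulf_neq0.
move=> x h hh.
have inv z : Phi z = fourier I tau trF (fourier I tau trF Phi) (- z).
  by rewrite hselfdual ?opprK //; case: hPhi.
rewrite (inv (x + h)) (inv x) opprD (fourier_periodic hL hram htau I (- x) supp_hat) //.
by apply: (in_idealN (proj1 hram)); rewrite (_ : _ - _ - _ = c + n - 1) //; lia.
Qed.
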